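(* If $L \subseteq a^*$ is a regular language over a one-letter alphabet, then $\mathbb{OGI}^*(L)$ is regular.
   Context: Outfix-guided insertion: $x \leftarrow y = \{ x_1 u z v x_2 \mid x = x_1 u v x_2,\ y = u z v,\ u \neq \varepsilon,\ v \neq \varepsilon \}$, extended to languages by union over all pairs. $\mathbb{OGI}^{(0)}(L) = L$, $\mathbb{OGI}^{(i+1)}(L) = \mathbb{OGI}^{(i)}(L) \leftarrow \mathbb{OGI}^{(i)}(L)$, and $\mathbb{OGI}^*(L) = \bigcup_{i \geq 0} \mathbb{OGI}^{(i)}(L)$. *)

From mathcomp Require Import all_boot.
Set Implicit Arguments. Unset Strict Implicit. Unset Printing Implicit Defensive.

Definition word (Sigma : Type) := seq Sigma.
Definition lang (Sigma : Type) := word Sigma -> Prop.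

Record dfa (Sigma : finType) := DFA {
  dfa_state : finType;
  dfa_start : dfa_state;
  dfa_final : pred dfa_state;
  dfa_trans : dfa_state -> Sigma -> dfa_state }.

Definition dfa_accept (Sigma : finType) (A : dfa Sigma) (w : word Sigma) : bool :=
  @dfa_final Sigma A (foldl (@dfa_trans Sigma A) (@dfa_start Sigma A) w).

Definition regular (Sigma : finType) (L : lang Sigma) : Prop :=
  exists A : dfa Sigma, forall w, L w <-> dfa_accept A w.

Definition ogi_word (Sigma : Type) (x y : word Sigma) : lang Sigma :=
  fun w => exists x1 u v x2 z : word Sigma,
    [/\ x = x1 ++ u ++ v ++ x2, y = u ++ z ++ v, u <> [::], v <> [::]
      & w = x1 ++ u ++ z ++ v ++ x2].

Definition ogi_lang (Sigma : Type) (L1 L2 : lang Sigma) : lang Sigma :=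
  fun w => exists x y, [/\ L1 x, L2 y & ogi_word x y w].

Fixpoint ogi_iter (Sigma : Type) (i : nat) (L : lang Sigma) : lang Sigma :=
  match i with
  | 0 => L
  | i'.+1 => ogi_lang (ogi_iter i' L) (ogi_iter i' L)
  end.

Definition ogi_star (Sigma : Type) (L : lang Sigma) : lang Sigma :=
  fun w => exists i, ogi_iter i L w.

From mathcomp Require Import all_boot zify.
From Stdlib Require Import Classical.

Set Implicit Arguments.
Unset Strict Implicit.
Unset Printing Implicit Defensive.

(* Over a one-letter alphabet only lengths matter. An insertion step turns
   a^m and a^n (m, n >= 2) into some a^k with max(m, n) <= k <= m + n - 2, so
   words of length at most 2 never produce anything new, while from a^n with
   n >= 3 one obtains a^(n+1) (take u = a, v = a^(n-2), z = a). Hence, if q is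
   the least length >= 3 of a word of L, OGI*(L) = L + { a^k | k >= q }, and
   both parts are recognized by finite automata; if there is no such word,
   OGI*(L) = L. *)

Section Regular.
Variable Sigma : finType.

Lemma regular_ext (L1 L2 : lang Sigma) :
  (forall w, L1 w <-> L2 w) -> regular L1 -> regular L2.
Proof. by move=> eqL [A HA]; exists A => w; rewrite -eqL. Qed.

Lemma foldl_pair (S T : Type) (f : S -> Sigma -> S) (g : T -> Sigma -> T)
    (w : word Sigma) s t :
  foldl (fun p c => (f p.1 c, g p.2 c)) (s, t) w = (foldl f s w, foldl g t w).
Proof. by elim: w s t => //= c w IH s t; rewrite IH. Qed.

Lemma regular_or (L1 L2 : lang Sigma) :
  regular L1 -> regular L2 -> regular (fun w => L1 w \/ L2 w).
Proof.
move=> [A HA] [B HB].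
exists (@DFA Sigma (dfa_state A * dfa_state B)%type (dfa_start A, dfa_start B)
  (fun p => dfa_final p.1 || dfa_final p.2)
  (fun p c => (dfa_trans p.1 c, dfa_trans p.2 c))) => w.
rewrite /dfa_accept /= foldl_pair /= -[dfa_final _]/(dfa_accept A w).
rewrite -[dfa_final _]/(dfa_accept B w).
by split => [[/HA->|/HB->]|/orP[/HA|/HB]]; rewrite ?orbT; auto.
Qed.

Section Threshold.
Variables (a : Sigma) (q : nat).

(* A counter of a's saturating at [q]; [None] is the sink entered on any other letter. *)
Definition count_step (s : option 'I_q.+1) (c : Sigma) : option 'I_q.+1 :=
  if s is Some i then (if c == a then Some (inord (minn i.+1 q)) else None)
  else None.

Lemma count_step_None w : foldl count_step None w = None.
Proof. by elim: w. Qed.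

Lemma count_step_Some (i : 'I_q.+1) w :
  omap val (foldl count_step (Some i) w) =
  if all (pred1 a) w then Some (minn (i + size w) q) else None.
Proof.
elim: w i => [|c w IH] i /=.
  by rewrite addn0; congr Some; have := ltn_ord i; lia.
case: (c == a) => /=; last by rewrite count_step_None.
by rewrite IH inordK; [case: all => //; congr Some; lia | lia].
Qed.

Lemma regular_unary_ge : regular (fun w => all (pred1 a) w /\ q <= size w).
Proof.
exists (@DFA Sigma (option 'I_q.+1) (Some ord0)
  (fun s => omap val s == Some q) count_step) => w.
rewrite /dfa_accept /= count_step_Some add0n.
case: all; last by split => [[]|].
by split => [[_ le_qw]|/eqP[]]; [apply/eqP; congr Some | split]; lia.
Qed.

End Threshold.
End Regular.

Section Insertion.
Variable Sigma : eqType.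
Implicit Types x y w : word Sigma.

Lemma ogi_word_size x y w : ogi_word x y w ->
  [/\ size x <= size w, size y <= size w & size w + 2 <= size x + size y].
Proof.
case=> x1 [u [v [x2 [z [-> -> u0 v0 ->]]]]].
have : 0 < size u by case: u u0.
have : 0 < size v by case: v v0.
by rewrite !size_cat; split; lia.
Qed.

Lemma ogi_word_unary a x y w : ogi_word x y w ->
  all (pred1 a) x -> all (pred1 a) y -> all (pred1 a) w.
Proof.
case=> x1 [u [v [x2 [z [-> -> _ _ ->]]]]].
by rewrite !all_cat => /and4P[-> -> -> ->] /and3P[_ -> _].
Qed.

Lemma ogi_word_short a x y w : ogi_word x y w ->
  all (pred1 a) x -> all (pred1 a) y -> size x <= 2 -> size y <= 2 -> w = x.
Proof.
move=> xyw ax ay x2 y2; have [xw _ wxy] := ogi_word_size xyw.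
move/all_pred1P: (ogi_word_unary xyw ax ay) => ->; move/all_pred1P: ax => ->.
by congr nseq; lia.
Qed.

Lemma ogi_word_nseqS (a : Sigma) n :
  3 <= n -> ogi_word (nseq n a) (nseq n a) (nseq n.+1 a).
Proof.
case: n => [|[|[|n]]] // _.
exists [::], [:: a], (nseq n.+1 a), [:: a], [:: a].
have snoc_a : nseq n.+1 a ++ [:: a] = nseq n.+2 a by rewrite -(addn1 n.+1) nseqD.
by split => //; rewrite cat0s !cat1s snoc_a.
Qed.

Variables (a : Sigma) (L : lang Sigma).
Hypothesis L_unary : forall w, L w -> all (pred1 a) w.

Definition long_member_le n := exists2 k, 3 <= k /\ L (nseq k a) & k <= n.

Lemma ogi_iter_unary i w : ogi_iter i L w ->
  L w \/ all (pred1 a) w /\ long_member_le (size w).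
Proof.
elim: i w => [|i IH] w /=; first by left.
case=> x [y [/IH Px /IH Py xyw]].
have unary v : L v \/ all (pred1 a) v /\ long_member_le (size v) -> all (pred1 a) v.
  by case=> [/L_unary|[]].
have [ax ay] := (unary x Px, unary y Py).
have aw := ogi_word_unary xyw ax ay; have [xw yw _] := ogi_word_size xyw.
have long v : L v -> all (pred1 a) v -> 3 <= size v <= size w ->
    long_member_le (size w).
  by move=> Lv /all_pred1P av /andP[v3 vw]; exists (size v); rewrite -?av.
case: Px => [Lx | [_ [k k3 kx]]]; last first.
  by right; split => //; exists k => //; apply: leq_trans xw.
case: Py => [Ly | [_ [k k3 ky]]]; last first.
  by right; split => //; exists k => //; apply: leq_trans yw.
case: (leqP 3 (size x)) => [x3 | x2].
  by right; split => //; apply: (long x Lx ax); rewrite x3.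
case: (leqP 3 (size y)) => [y3 | y2].
  by right; split => //; apply: (long y Ly ay); rewrite y3.
by left; rewrite (ogi_word_short xyw ax ay).
Qed.

Lemma ogi_iter_nseqS i n :
  3 <= n -> ogi_iter i L (nseq n a) -> ogi_iter i.+1 L (nseq n.+1 a).
Proof.
by move=> n3 Ln; exists (nseq n a), (nseq n a); split => //; apply: ogi_word_nseqS.
Qed.

Lemma ogi_star_nseq_le n m :
  3 <= n <= m -> ogi_star L (nseq n a) -> ogi_star L (nseq m a).
Proof.
case/andP=> n3; elim: m => [|m IH]; first by move=> n0; lia.
rewrite leq_eqVlt ltnS => /predU1P[<- // | le_nm /(IH le_nm) [i Lm]].
by exists i.+1; apply: ogi_iter_nseqS Lm; lia.
Qed.

Lemma ogi_star_unaryE w :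
  ogi_star L w <-> L w \/ all (pred1 a) w /\ long_member_le (size w).
Proof.
split=> [[i /ogi_iter_unary] // | [Lw | [/all_pred1P aw [k [k3 Lk] kw]]]].
  by exists 0.
by rewrite aw; apply: (@ogi_star_nseq_le k); [rewrite k3 | exists 0].
Qed.

End Insertion.

Lemma ex_minn_leq (P : pred nat) (exP : exists n, P n) n :
  (exists2 k, P k & k <= n) <-> ex_minn exP <= n.
Proof.
case: ex_minnP => m Pm m_min.
by split => [[k /m_min mk kn] | mn]; [exact: leq_trans mk kn | exists m].
Qed.

Theorem theorem4p11 (Sigma : finType) (a : Sigma) (L : lang Sigma) :
  (forall w, L w -> w = nseq (size w) a) ->
  regular L -> regular (ogi_star L).
Proof.
move=> L_nseq regL; have [A HA] := regL.
have L_unary w : L w -> all (pred1 a) w by move/L_nseq/all_pred1P.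
have longE n : long_member_le a L n <->
    exists2 k, (3 <= k) && dfa_accept A (nseq k a) & k <= n.
  by split=> [[k [k3 /HA Ak] kn] | [k /andP[k3 /HA Lk] kn]]; exists k; rewrite ?k3.
case: (classic (exists k, (3 <= k) && dfa_accept A (nseq k a))) => [ex | no_long].
  apply: regular_ext (regular_or regL (regular_unary_ge a (ex_minn ex))) => w.
  by rewrite (ogi_star_unaryE L_unary) longE (ex_minn_leq ex).
apply: regular_ext regL => w; rewrite (ogi_star_unaryE L_unary).
by split=> [Lw | [// | [_ /longE [k Ak _]]]]; [left | case: no_long; exists k].
Qed.
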